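(* Let $G$ be a finite group, $\varphi\in\mathrm{Aut}(G)$, and $U$ a subgroup with $\Delta(G,\varphi)\leq U\leq G\times G$. Suppose that for some $i\in\{1,2\}$ we have (i) $k_i(U)\cap G'\neq 1$, and (ii) $k_i(U)\leq Z(G)$. Then $U$ is not extensible.
   Context: $\Delta(G,\varphi)=\{(g,\varphi(g)):g\in G\}$. For $U\leq G\times G$: $k_1(U)=\{g:(g,1)\in U\}$, $k_2(U)=\{h:(1,h)\in U\}$; such $U$ is a subdirect product of $G$ and $G$. $G'$ is the commutator subgroup, $Z(G)$ the center. An abelian group $A$ satisfies the Hypothesis (with set of primes $\pi$) if there is a unique set of primes $\pi$ such that for every $n\in\mathbb{N}$ the $n$-torsion part of $A$ is cyclic of order $n_\pi$ (the $\pi$-part of $n$). $U$ is $A$-extensible if every homomorphism $U\to A$ extends to a homomorphism $G\times G\to A$; $U$ is extensible if it is $A$-extensible for every abelian group $A$ satisfying the Hypothesis. *)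

From HB Require Import structures.
From mathcomp Require Import all_boot all_order all_algebra all_fingroup all_solvable.
Set Implicit Arguments. Unset Strict Implicit. Unset Printing Implicit Defensive.
Import GRing.Theory.
Local Open Scope group_scope.

Definition Delta (gT : finGroupType) (G : {set gT}) (phi : {perm gT})
  : {set gT * gT} := [set (g, phi g) | g in G].

Definition k1 (gT : finGroupType) (U : {set gT * gT}) : {set gT} :=
  [set g | (g, 1) \in U].
Definition k2 (gT : finGroupType) (U : {set gT * gT}) : {set gT} :=
  [set h | (1, h) \in U].

Definition torsion_cyclic_of_order (A : zmodType) (n m : nat) : Prop :=
  exists a : A,
    [/\ (a *+ m = 0)%R,
        (forall k, 0 < k < m -> (a *+ k != 0)%R) &
        (forall x : A, (x *+ n = 0)%R <-> exists k, x = (a *+ k)%R)].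

Definition torsion_prop (A : zmodType) (pi : nat_pred) : Prop :=
  forall n, 0 < n -> torsion_cyclic_of_order A n (n`_pi).

Definition prime_set (pi : nat_pred) : Prop := forall p, p \in pi -> prime p.

Definition Hypothesis_ab (A : zmodType) : Prop :=
  exists pi : nat_pred,
    [/\ prime_set pi, torsion_prop A pi &
        forall pi' : nat_pred, prime_set pi' -> torsion_prop A pi' -> pi' =i pi].

Definition hom_on (gT : finGroupType) (A : zmodType) (H : {set gT}) (f : gT -> A)
  : Prop := forall x y, x \in H -> y \in H -> f (x * y) = (f x + f y)%R.

Definition A_extensible (gT : finGroupType) (G : {set gT}) (U : {set gT * gT})
  (A : zmodType) : Prop :=
  forall f : gT * gT -> A, hom_on U f ->
    exists g : gT * gT -> A, hom_on (setX G G) g /\ {in U, forall u, g u = f u}.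

Definition extensible (gT : finGroupType) (G : {set gT}) (U : {set gT * gT})
  : Prop := forall A : zmodType, Hypothesis_ab A -> A_extensible G U A.

(* Write K = k_2(U).  Since Delta(G, phi) <= U, the map u |-> u.2 phi(u.1)^-1
   sends U into K; it is a homomorphism because K is central, and it maps
   (1, x) to x.  Composing it with a linear character of the abelian group K
   that is nontrivial at some 1 <> z in K /\ G' gives a homomorphism f from U
   to C^x with f(1, z) <> 1.  An extension g of f to G x G would make
   x |-> g(1, x) a homomorphism from G to an abelian group, which kills z.
   C^x satisfies the Hypothesis (with the set of all primes), and swapping the
   factors of G x G reduces the case i = 1 to i = 2. *)
From HB Require Import structures.
From mathcomp Require Import all_boot all_algebra all_fingroup all_solvable.
From mathcomp Require Import all_field all_character.
Set Implicit Arguments. Unset Strict Implicit. Unset Printing Implicit Defensive.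
Import GRing.Theory.

Local Open Scope ring_scope.

(* The multiplicative group of nonzero algebraic complex numbers, written
   additively: 0 is 1, + is *, and - is the inverse. *)
Record algCx := AlgCx {algCx_val : algC; algCx_neq0 : algCx_val != 0}.

HB.instance Definition _ := [isSub for algCx_val].
HB.instance Definition _ := [Choice of algCx by <:].

Definition algCx_one := AlgCx (oner_neq0 algC).
Definition algCx_mul (a b : algCx) := AlgCx (mulf_neq0 (algCx_neq0 a) (algCx_neq0 b)).
Definition algCx_inv (a : algCx) := AlgCx (invr_neq0 (algCx_neq0 a)).

Lemma algCx_mulA : associative algCx_mul.
Proof. by move=> a b c; apply: val_inj; rewrite /= mulrA. Qed.

Lemma algCx_mulC : commutative algCx_mul.
Proof. by move=> a b; apply: val_inj; rewrite /= mulrC. Qed.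

Lemma algCx_mul1 : left_id algCx_one algCx_mul.
Proof. by move=> a; apply: val_inj; rewrite /= mul1r. Qed.

Lemma algCx_mulV : left_inverse algCx_one algCx_inv algCx_mul.
Proof. by move=> a; apply: val_inj; rewrite /= mulVf ?algCx_neq0. Qed.

HB.instance Definition _ :=
  GRing.isZmodule.Build algCx algCx_mulA algCx_mulC algCx_mul1 algCx_mulV.

Lemma algCx_valD (a b : algCx) : algCx_val (a + b) = algCx_val a * algCx_val b.
Proof. by []. Qed.

Lemma algCx_valMn (a : algCx) k : algCx_val (a *+ k) = algCx_val a ^+ k.
Proof. by elim: k => [|k IHk]; rewrite ?expr0 // mulrS algCx_valD IHk exprS. Qed.

Lemma algCx_eq0 (a : algCx) : (a == 0) = (algCx_val a == 1).
Proof. by []. Qed.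

(* Junk value 0 (that is, 1) on the argument 0. *)
Definition algCx_of (x : algC) : algCx := insubd (0 : algCx) x.

Lemma algCx_ofK x : x != 0 -> algCx_val (algCx_of x) = x.
Proof. by move=> x_neq0; rewrite insubdK. Qed.

Lemma algCx_torsion n : (0 < n)%N -> torsion_cyclic_of_order algCx n n.
Proof.
move=> n_gt0; have [z prim_z] := C_prim_root_exists n_gt0.
have z_neq0 : z != 0 by rewrite (prim_root_eq0 prim_z) -lt0n.
have zn0 : algCx_of z *+ n = 0.
  by apply/eqP; rewrite algCx_eq0 algCx_valMn algCx_ofK ?prim_expr_order.
exists (algCx_of z); split=> // [k /andP[k_gt0 lt_kn] | x].
  by rewrite algCx_eq0 algCx_valMn algCx_ofK // -(prim_order_dvd prim_z) gtnNdvd.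
split=> [/eqP | [k ->]]; last by rewrite mulrnAC zn0 mul0rn.
rewrite algCx_eq0 algCx_valMn => /eqP /(prim_rootP prim_z) [k xk].
by exists k; apply: val_inj; rewrite /= xk algCx_valMn algCx_ofK.
Qed.

Lemma torsion_cyclic_of_order1 (A : zmodType) n (x : A) :
  torsion_cyclic_of_order A n 1 -> x *+ n = 0 -> x = 0.
Proof.
by case=> a [a0 _ torsion] /torsion[k ->]; rewrite mulr1n in a0; rewrite a0 mul0rn.
Qed.

Lemma algCx_Hypothesis : Hypothesis_ab algCx.
Proof.
pose all_primes : nat_pred := [pred p | prime p].
have partn_all_primes n : (0 < n)%N -> (n`_all_primes)%N = n.
  move=> n_gt0; apply: part_pnat_id; rewrite /pnat n_gt0; apply/allP => p.
  by rewrite mem_primes => /andP[].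
exists all_primes; split=> // [n n_gt0 | pi pi_prime pi_torsion p].
  by rewrite partn_all_primes //; apply: algCx_torsion.
apply/idP/idP=> [/pi_prime // | p_prime]; apply: contraT => p_notin_pi.
have p_gt0 := prime_gt0 p_prime.
have p_pi1 : (p`_pi)%N = 1%N by apply/eqP; rewrite partn_eq1 // pnatE // inE p_notin_pi.
have [a [ap0 a_neq0 _]] := algCx_torsion p_gt0.
have := pi_torsion p p_gt0; rewrite p_pi1 => /torsion_cyclic_of_order1 /(_ ap0) a0.
by have /negP[] := a_neq0 1%N (prime_gt1 p_prime); rewrite a0 mul0rn.
Qed.

Lemma abelian_separating_algCx (gT : finGroupType) (K : {group gT}) z :
  abelian K -> z \in K -> z != 1%g ->
  exists2 h : gT -> algCx, hom_on K h & h z != 0.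
Proof.
move=> cKK Kz z_neq1.
have [i z_notin_ker] : exists i, z \notin cfker 'chi[K]_i.
  apply/existsP; apply: contraR z_neq1 => /existsPn z_in_ker.
  suff: z \in \bigcap_i cfker 'chi[K]_i by rewrite TI_cfker_irr inE.
  by apply/bigcapP => i _; apply/negPn.
have chi_lin : 'chi_i \is a linear_char by apply/char_abelianP.
exists (fun x => algCx_of ('chi_i x)).
  move=> x y Kx Ky; apply: val_inj => /=.
  by rewrite !algCx_ofK ?lin_char_neq0 ?groupM ?lin_charM.
move: z_notin_ker; rewrite cfkerEirr inE lin_char1 //.
by rewrite algCx_eq0 algCx_ofK ?lin_char_neq0.
Qed.

Local Close Scope ring_scope.
Local Open Scope group_scope.

Section HomOn.

Variables (gT : finGroupType) (A : zmodType) (G : {group gT}) (h : gT -> A).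
Hypothesis hM : hom_on G h.

Lemma hom_on1 : h 1 = 0%R.
Proof. by apply: (@addrI _ (h 1)); rewrite -hM ?mulg1 ?addr0. Qed.

Lemma hom_onV x : x \in G -> h x^-1 = (- h x)%R.
Proof.
by move=> Gx; apply: (@addrI _ (h x)); rewrite -hM ?groupV // mulgV hom_on1 subrr.
Qed.

Lemma hom_on_der1 : {in G^`(1), forall z, h z = 0%R}.
Proof.
have ker_group : group_set [set x in G | h x == 0%R].
  apply/group_setP; split=> [|x y]; first by rewrite inE group1 hom_on1 /=.
  rewrite !inE => /andP[Gx /eqP hx0] /andP[Gy /eqP hy0].
  by rewrite groupM // hM // hx0 hy0 addr0 eqxx.
suff /subsetP der1_ker : G^`(1) \subset Group ker_group.
  by move=> z /der1_ker; rewrite inE => /andP[_ /eqP].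
rewrite derg1 gen_subG; apply/subsetP => _ /imset2P[x y Gx Gy ->].
rewrite inE groupR //= commgEl conjgE !mulgA !hM ?(groupM, groupV) //.
by rewrite !hom_onV // (addrC (- h x)%R) addrNK addNr.
Qed.

End HomOn.

Lemma pair1M (gT : finGroupType) (x y : gT) : (1, x) * (1, y) = (1, x * y) :> gT * gT.
Proof. by rewrite -[in RHS](mulg1 1). Qed.

Lemma hom_on_not_A_extensible (gT : finGroupType) (A : zmodType) (G : {group gT})
    (U : {set gT * gT}) (f : gT * gT -> A) z :
  hom_on U f -> z \in G^`(1) -> z \in k2 U -> f (1, z) != 0%R ->
  ~ A_extensible G U A.
Proof.
move=> fM G'z; rewrite inE => Uz fz_neq0 /(_ f fM)[g [gM gf]].
have g2M : hom_on G (fun x => g (1, x)).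
  by move=> x y Gx Gy; rewrite -gM ?in_setX ?group1 // pair1M.
by move: fz_neq0; rewrite -gf // (hom_on_der1 g2M G'z) eqxx.
Qed.

Lemma k2_group_set (gT : finGroupType) (U : {group gT * gT}) : group_set (k2 U).
Proof.
apply/group_setP; split=> [|x y]; first by rewrite inE group1.
by rewrite !inE => Ux Uy; rewrite -pair1M groupM.
Qed.

Canonical k2_group gT U := Group (@k2_group_set gT U).

Section SwapFactors.

Variables (gT : finGroupType) (G : {group gT}) (U : {group gT * gT}).

Lemma swap_group_set : group_set (swap_pair @: U).
Proof.
apply/group_setP; split=> [|_ _ /imsetP[u Uu ->] /imsetP[v Uv ->]].
  by apply/imsetP; exists 1.
by apply/imsetP; exists (u * v); rewrite ?groupM.
Qed.

Definition swap_group := Group swap_group_set.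

Lemma k2_swap : k2 swap_group = k1 U.
Proof. by apply/setP => x; rewrite !inE /= (can_imset_pre _ swap_pairK) !inE. Qed.

Lemma swap_subX : U \subset setX G G -> swap_group \subset setX G G.
Proof.
move=> sUX; apply/subsetP => _ /imsetP[[a b] /(subsetP sUX) + ->].
by rewrite !in_setX andbC.
Qed.

Lemma Delta_swap (phi : {perm gT}) :
  phi \in Aut G -> Delta G phi \subset U -> Delta G phi^-1 \subset swap_group.
Proof.
move=> phiAut sDU; apply/subsetP => _ /imsetP[x Gx ->]; apply/imsetP.
exists (phi^-1 x, phi (phi^-1 x)); last by rewrite permKV.
by apply: (subsetP sDU); rewrite imset_f ?Aut_closed ?groupV.
Qed.

Lemma extensible_swap : extensible G U -> extensible G swap_group.
Proof.
move=> extU A hypA f fM; have [|g [gM gf]] := extU A hypA (f \o swap_pair).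
  by move=> u v Uu Uv; rewrite /= -fM ?imset_f.
exists (g \o swap_pair); split=> [[a b] [c d] | _ /imsetP[u Uu ->]].
  rewrite !in_setX => /andP[Ga Gb] /andP[Gc Gd].
  by rewrite /= -gM ?in_setX ?Ga ?Gb ?Gc ?Gd.
by rewrite /= swap_pairK gf.
Qed.

End SwapFactors.

Section CentralSecondKernel.

Variables (gT : finGroupType) (G : {group gT}) (phi : {perm gT}) (U : {group gT * gT}).
Hypotheses (phiAut : phi \in Aut G) (sDU : Delta G phi \subset U).
Hypothesis sUX : U \subset setX G G.

Definition graph_defect (u : gT * gT) : gT := u.2 * (phi u.1)^-1.

Lemma graph_defect_k2 u : u \in U -> graph_defect u \in k2 U.
Proof.
case: u => a b Uab; have /(subsetP sUX) := Uab; rewrite in_setX => /andP[Ga _].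
have Uaphia : (a, phi a) \in U by apply: (subsetP sDU); rewrite imset_f.
by rewrite inE -(mulgV a); apply: groupM Uab (groupVr Uaphia).
Qed.

Lemma graph_defect1 x : graph_defect (1, x) = x.
Proof. by rewrite /graph_defect -(autmE phiAut) morph1 invg1 mulg1. Qed.

Lemma graph_defectM :
  k2 U \subset 'Z(G) -> {in U &, {morph graph_defect : u v / u * v}}.
Proof.
move=> sKZ [a b] [c d] Uab Ucd.
have /(subsetP sUX) := Uab; rewrite in_setX => /andP[Ga _].
have /(subsetP sUX) := Ucd; rewrite in_setX => /andP[Gc _].
have /(subsetP sKZ)/centerP[_ cGdef] := graph_defect_k2 Ucd.
have phiM : {in G &, {morph phi : x y / x * y}}.
  by move=> x y Gx Gy; rewrite -(autmE phiAut) morphM.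
rewrite /graph_defect /= phiM // invMg -[RHS]mulgA -cGdef ?groupV ?Aut_closed //.
by rewrite !mulgA.
Qed.

Lemma central_k2_not_extensible :
  k2 U :&: G^`(1) != 1 -> k2 U \subset 'Z(G) -> ~ extensible G U.
Proof.
move=> /trivgPn[z /setIP[Kz G'z] z_neq1] sKZ extU.
have cKK : abelian (k2 U) := abelianS sKZ (center_abelian G).
have [h hM hz_neq0] := abelian_separating_algCx cKK Kz z_neq1.
have fM : hom_on U (h \o graph_defect).
  by move=> u v Uu Uv; rewrite /= graph_defectM // hM ?graph_defect_k2.
apply: hom_on_not_A_extensible fM G'z Kz _ (extU _ algCx_Hypothesis).
by rewrite /= graph_defect1.
Qed.

End CentralSecondKernel.

Theorem corollary5p3 (gT : finGroupType) (G : {group gT}) (phi : {perm gT})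
  (phiAut : phi \in Aut G) (U : {group gT * gT})
  (hDU : Delta G phi \subset U) (hUG : U \subset setX G G) :
  ((k1 U :&: G^`(1) != 1) && (k1 U \subset 'Z(G))) \/
  ((k2 U :&: G^`(1) != 1) && (k2 U \subset 'Z(G))) ->
  ~ extensible G U.
Proof.
case=> /andP[ntK sKZ].
  have phiVAut : phi^-1 \in Aut G by rewrite groupV.
  have := central_k2_not_extensible phiVAut (Delta_swap phiAut hDU) (swap_subX hUG).
  by rewrite k2_swap => /(_ ntK sKZ) + /extensible_swap.
exact: central_k2_not_extensible phiAut hDU hUG ntK sKZ.
Qed.
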